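(* If $C$ is a sorting network on $n$ channels with depth $d$, then there is a co-saturated sorting network $N$ on $n$ channels with depth $d$.
   Context: Channels are numbered $1,\ldots,n$. A comparator network on $n$ channels of depth $d$ is a sequence $C=L_1;\ldots;L_d$ of layers; each layer is a set of comparators $(i,j)$ with $1\le i<j\le n$, and each channel occurs in at most one comparator of a given layer. An input $\bar x\in\{0,1\}^n$ propagates as follows: $\bar x_0=\bar x$, and $\bar x_k$ is obtained from $\bar x_{k-1}$ by, for each $(i,j)\in L_k$, putting the minimum of the values at positions $i,j$ at position $i$ and the maximum at position $j$. The output is $C(\bar x)=\bar x_d$, and $C$ is a sorting network if $C(\bar x)$ is sorted in non-decreasing order for every $\bar x\in\{0,1\}^n$. A channel is used in layer $L_\ell$ if it occurs in a comparator of $L_\ell$. The last layer $L_d$ is in last layer normal form (llnf) if every comparator in $L_d$ is of the form $(i,i+1)$ and there is no $i<n$ with both $i$ and $i+1$ unused in $L_d$. The blocks (or $(d-1)$-blocks) of $C$ are the vertex sets of connected components of the graph on $\{1,\ldots,n\}$ with an edge $\{i,j\}$ for each comparator $(i,j)\in L_d$; when $L_d$ is in llnf, each block is either a single channel unused in $L_d$ or a pair $\{i,i+1\}$ with $(i,i+1)\in L_d$, and the blocks are ordered top to bottom as consecutive intervals. A sorting network of depth $d$ is co-saturated if: (i) its last layer is in llnf; (ii) there are no two consecutive blocks each of which contains a channel unused in layer $L_{d-1}$; and (iii) whenever $(i,i+1)\in L_d$ and channels $i$ and $i+1$ are both unused in $L_{d-1}$, the channels $i-1$ and $i+2$ (whenever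 they exist, i.e. lie in $\{1,\ldots,n\}$) are used in $L_d$. *)

(* Channels are numbered 1..n (as in the paper). *)
From mathcomp Require Import all_boot.
Set Implicit Arguments. Unset Strict Implicit. Unset Printing Implicit Defensive.

Definition comparator := (nat * nat)%type.
Definition comparator_ok (n : nat) (c : comparator) : bool :=
  (1 <= c.1) && (c.1 < c.2) && (c.2 <= n).

Definition layer := seq comparator.
Definition layer_channels (L : layer) : seq nat := flatten [seq [:: c.1; c.2] | c <- L].
Definition layer_ok (n : nat) (L : layer) : bool :=
  all (comparator_ok n) L && uniq (layer_channels L).

Definition network := seq layer.
Definition network_ok (n : nat) (C : network) : bool := all (layer_ok n) C.
Definition depth (C : network) : nat := size C.

Definition val_at (s : seq bool) (i : nat) : bool := nth false s i.-1.

Definition apply_comp (s : seq bool) (c : comparator) : seq bool :=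
  let a := val_at s c.1 in
  let b := val_at s c.2 in
  set_nth false (set_nth false s c.1.-1 (a && b)) c.2.-1 (a || b).

(* comparators of a layer are disjoint, so applying them sequentially is
   the same as applying them in parallel *)
Definition apply_layer (s : seq bool) (L : layer) : seq bool := foldl apply_comp s L.
Definition run (C : network) (s : seq bool) : seq bool := foldl apply_layer s C.

(* sorted in non-decreasing order (false = 0 < true = 1) *)
Definition sorted01 (s : seq bool) : bool := sorted (fun a b : bool => a ==> b) s.

Definition sorting_network (n : nat) (C : network) : Prop :=
  network_ok n C /\ forall x : n.-tuple bool, sorted01 (run C x).

Definition used (L : layer) (i : nat) : bool := i \in layer_channels L.

Definition last_layer (C : network) : layer := nth [::] C (size C).-1.
Definition prev_layer (C : network) : layer :=
  if 2 <= size C then nth [::] C (size C - 2) else [::].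

Definition llnf (n : nat) (L : layer) : bool :=
  all (fun c : comparator => c.2 == c.1.+1) L &&
  all (fun i => used L i || used L i.+1) (iota 1 n.-1).

(* The blocks (connected components of the graph of L) listed top to bottom;
   valid when L is in llnf: either a pair [i; i+1] with (i,i+1) in L,
   or a singleton [i] of a channel unused in L. *)
Fixpoint blocks_aux (fuel i n : nat) (L : layer) : seq (seq nat) :=
  match fuel with
  | 0 => [::]
  | f.+1 =>
      if n < i then [::]
      else if (i, i.+1) \in L then [:: i; i.+1] :: blocks_aux f i.+2 n L
      else [:: i] :: blocks_aux f i.+1 n L
  end.
Definition blocks (n : nat) (L : layer) : seq (seq nat) := blocks_aux n 1 n L.

Definition co_saturated (n : nat) (C : network) : Prop :=
  let Ld := last_layer C in
  let Lp := prev_layer C in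
  let bs := blocks n Ld in
  let has_unused (B : seq nat) := has (fun i => ~~ used Lp i) B in
  [/\ llnf n Ld,
      (forall k, k.+1 < size bs ->
         ~~ (has_unused (nth [::] bs k) && has_unused (nth [::] bs k.+1)))
    & (forall i, (i, i.+1) \in Ld -> ~~ used Lp i -> ~~ used Lp i.+1 ->
         (1 < i -> used Ld i.-1) /\ (i.+2 <= n -> used Ld i.+2))].

From mathcomp Require Import all_boot zify.
Set Implicit Arguments. Unset Strict Implicit. Unset Printing Implicit Defensive.

(* Only the last two layers are modified. A comparator (i, j) of the last
   layer with j > i + 1 is redundant: when the input has between i and j - 1
   zeros, the last layer receives complementary bits on channels i and j, and
   by monotonicity the bit on channel i is then the same for any two
   comparable such inputs; moving a descent 10 -> 01 of the input through a
   comparable intermediate input connects every such input to the sorted one,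
   where this bit is 0. Dropping these comparators and joining adjacent channels
   unused in the last layer yields a last layer in llnf. Since the last layer
   then only compares neighbours, the previous layer already outputs a <= b on
   any two channels a < b lying in consecutive blocks; so a violation of (ii)
   is repaired by adding (a, b) to the previous layer, and a violation of (iii)
   by moving (i, i + 1) to the previous layer and joining i or i + 1 to its free
   neighbour in the last layer. Each repair uses one more channel of the
   previous layer, hence the process terminates. *)

Definition comp_wf (c : comparator) := (0 < c.1) && (c.1 < c.2).

Definition comp_disjoint (c d : comparator) :=
  [&& c.1 != d.1, c.1 != d.2, c.2 != d.1 & c.2 != d.2].

Lemma val_at_ext s t : size s = size t ->
  (forall p, 0 < p -> val_at s p = val_at t p) -> s = t.
Proof. by move=> hst h; apply: (eq_from_nth hst) => k _; apply: (h k.+1). Qed.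

Lemma val_apply_comp s c p : comp_wf c -> 0 < p ->
  val_at (apply_comp s c) p =
  if p == c.2 then val_at s c.1 || val_at s c.2
  else if p == c.1 then val_at s c.1 && val_at s c.2 else val_at s p.
Proof.
case/andP=> c1 c12 p0; rewrite {1}/val_at /apply_comp nth_set_nth /= nth_set_nth /=.
have e q : 0 < q -> (p.-1 == q.-1) = (p == q) by move=> q0; apply/eqP/eqP; lia.
have c2 : 0 < c.2 by lia.
by rewrite !e.
Qed.

Lemma size_apply_comp s c : comp_wf c -> c.2 <= size s ->
  size (apply_comp s c) = size s.
Proof. case/andP=> c1 c12 hs; rewrite /apply_comp !size_set_nth; lia. Qed.

Lemma count_set_nth_add (P : pred bool) s k v : k < size s ->
  count P (set_nth false s k v) + P (nth false s k) = count P s + P v.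
Proof.
move=> hk; rewrite count_set_nth_ltn //.
case: (boolP (P (nth false s k))) => Pk; last by rewrite subn0 addn0.
have : 0 < count P s.
  by rewrite -has_count; apply/hasP; exists (nth false s k) => //; exact: mem_nth.
lia.
Qed.

Lemma count_apply_comp (P : pred bool) s c : comp_wf c -> c.2 <= size s ->
  count P (apply_comp s c) = count P s.
Proof.
case/andP=> c1 c12 hs; rewrite /apply_comp.
set a := val_at s c.1; set b := val_at s c.2.
have e1 := @count_set_nth_add P s c.1.-1 (a && b).
have e2 := @count_set_nth_add P (set_nth false s c.1.-1 (a && b)) c.2.-1 (a || b).
rewrite size_set_nth nth_set_nth /= ifN in e2; last by apply/eqP; lia.
have h1 : c.1.-1 < size s by lia.
have h2 : c.2.-1 < maxn c.1.-1.+1 (size s) by lia.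
move: (e1 h1) (e2 h2); clear e1 e2; rewrite -/(val_at s c.1) -/(val_at s c.2) -/a -/b.
by case: a; case: b => /=; lia.
Qed.

Lemma apply_compC s c d : comp_wf c -> comp_wf d -> comp_disjoint c d ->
  c.2 <= size s -> d.2 <= size s ->
  apply_comp (apply_comp s c) d = apply_comp (apply_comp s d) c.
Proof.
move=> hc hd /and4P [] /negPf cd11 /negPf cd12 /negPf cd21 /negPf cd22 hcs hds.
have [c1 c12] := andP hc; have [d1 d12] := andP hd.
apply: val_at_ext; first by rewrite !size_apply_comp ?size_apply_comp.
have [dc11 dc12 dc21 dc22] : [/\ (d.1 == c.1) = false, (d.2 == c.1) = false,
    (d.1 == c.2) = false & (d.2 == c.2) = false] by rewrite !(eq_sym d.1) !(eq_sym d.2).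
move=> p p0; rewrite !val_apply_comp //; try lia.
rewrite cd11 cd12 cd21 cd22 dc11 dc12 dc21 dc22.
case: (p =P d.2) => [->|_]; first by rewrite dc12 dc22.
case: (p =P d.1) => [->|_]; first by rewrite dc11 dc21.
by case: (p == c.2); case: (p == c.1).
Qed.

Lemma apply_comp_id s c : comp_wf c -> c.2 <= size s ->
  val_at s c.1 ==> val_at s c.2 -> apply_comp s c = s.
Proof.
move=> hc hs hab; apply: val_at_ext => [|p p0]; first by rewrite size_apply_comp.
rewrite val_apply_comp //; case: eqP => [->|_]; last case: eqP => [->|_] //.
all: by move: hab; case: (val_at s c.1); case: (val_at s c.2).
Qed.

Definition le01 (s t : seq bool) := forall k, nth false s k ==> nth false t k.

Lemma apply_comp_mono s t c : le01 s t -> le01 (apply_comp s c) (apply_comp t c).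
Proof.
move=> hst k; rewrite /apply_comp /val_at; do 2 rewrite !nth_set_nth /=.
have := hst c.1.-1; have := hst c.2.-1; have := hst k.
by case: (k == c.2.-1); case: (k == c.1.-1); do 6 case: (nth false _ _).
Qed.

Lemma sorted01_nseq s :
  sorted01 s -> s = nseq (count negb s) false ++ nseq (count id s) true.
Proof.
elim: s => [|b s IH] //= hs.
have hs' : sorted01 s by move: hs; rewrite /sorted01 /=; apply: path_sorted.
case: b hs => /= hs; last by rewrite !add0n -(IH hs').
have hall : all (implb true) s by apply: order_path_min => //; move=> [] [] [].
have hc : count id s = size s by apply/eqP; rewrite -all_count.
have -> : count negb s = 0.
  by apply/eqP; rewrite -(eqn_add2l (count id s)) addn0 count_predC hc.
rewrite hc /=; congr (_ :: _); apply/all_pred1P.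
by apply: sub_all hall => -[].
Qed.

Lemma nth_sorted01 s k : sorted01 s -> k < size s -> nth false s k = (count negb s <= k).
Proof.
move=> hs hk; rewrite {1}(sorted01_nseq hs) nth_cat size_nseq.
case: ltnP => h; first by rewrite nth_nseq h.
rewrite (sorted01_nseq hs) size_cat !size_nseq in hk.
by rewrite nth_nseq; case: ltnP => //; lia.
Qed.

Lemma sorted01_leq_nth s k l : sorted01 s -> k <= l -> l < size s ->
  nth false s k ==> nth false s l.
Proof.
move=> hs kl ls; rewrite !nth_sorted01 //; last exact: leq_ltn_trans ls.
by apply/implyP => /leq_trans; apply.
Qed.

Definition layer_wf (L : layer) := all comp_wf L && uniq (layer_channels L).

Definition layer_fits (L : layer) (s : seq bool) := all (fun c => c.2 <= size s) L.

Lemma used_cons L c p : used (c :: L) p = [|| p == c.1, p == c.2 | used L p].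
Proof. by rewrite /used /= !inE. Qed.

Lemma usedP L p :
  reflect (exists2 c : comparator, c \in L & (p == c.1) || (p == c.2)) (used L p).
Proof.
elim: L => [|c L IH]; first by right; case.
rewrite used_cons orbA; apply: (iffP orP) => [[hc|/IH [d hd hp]]|[d]].
- by exists c; rewrite ?mem_head.
- by exists d; rewrite // inE hd orbT.
- rewrite inE => /orP [/eqP ->|hd hp]; first by left.
  by right; apply/IH; exists d.
Qed.

Lemma layer_wf_cons c L :
  layer_wf (c :: L) = [&& comp_wf c, ~~ used L c.1, ~~ used L c.2 & layer_wf L].
Proof.
rewrite /layer_wf /= inE negb_or.
case: (boolP (comp_wf c)) => //= /andP [_ c12]; rewrite (ltn_eqF c12) /=.
by rewrite /used; case: (all _ _); case: (_ \notin _); case: (_ \notin _).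
Qed.

Lemma layer_wf_disjoint L c d : layer_wf L -> c \in L -> d \in L -> c != d ->
  comp_disjoint c d.
Proof.
have disj_cons e M f : layer_wf (e :: M) -> f \in M -> comp_disjoint e f.
  rewrite layer_wf_cons => /and4P [_ u1 u2 _] hf.
  have uf q : (q == f.1) || (q == f.2) -> used M q by move=> hq; apply/usedP; exists f.
  apply/and4P; split; apply/eqP => ef; [move: u1|move: u1|move: u2|move: u2];
    by rewrite ef uf ?eqxx ?orbT.
elim: L => [|e L IH] // hL.
have hL' : layer_wf L by move: hL; rewrite layer_wf_cons => /and4P [].
rewrite !inE => /orP [/eqP ->|hc] /orP [/eqP ->|hd]; rewrite ?eqxx //.
- by move=> _; apply: disj_cons hL hd.
- move=> _; have /and4P [? ? ? ?] := disj_cons _ _ _ hL hc.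
  by apply/and4P; split; rewrite eq_sym.
- exact: IH.
Qed.

Lemma layer_wf_comp L c : layer_wf L -> c \in L -> comp_wf c.
Proof. by case/andP=> /allP hL _; apply: hL. Qed.

Lemma used_filter P L p : used (filter P L) p -> used L p.
Proof. by case/usedP=> c; rewrite mem_filter => /andP [_ hc] hp; apply/usedP; exists c. Qed.

Lemma layer_wf_filter P L : layer_wf L -> layer_wf (filter P L).
Proof.
elim: L => [|c L IH] //=; rewrite layer_wf_cons => /and4P [hc u1 u2 hL].
case: (P c); last exact: IH.
by rewrite layer_wf_cons hc IH // !(contra (@used_filter P L _)).
Qed.

Lemma unused_filter_predC1 L c : layer_wf L -> c \in L ->
  ~~ used (filter (predC1 c) L) c.1 /\ ~~ used (filter (predC1 c) L) c.2.
Proof.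
move=> hL hc; split; apply/negP => /usedP [d]; rewrite mem_filter => /andP [/= hdc hd].
all: have hcd : c != d by rewrite eq_sym.
all: have /and4P [h11 h12 h21 h22] := layer_wf_disjoint hL hc hd hcd.
all: by case/orP=> /eqP e; rewrite e eqxx in h11 h12 h21 h22.
Qed.

Lemma size_apply_layer L s : all comp_wf L -> layer_fits L s ->
  size (apply_layer s L) = size s.
Proof.
elim: L s => [|c L IH] s //= /andP [hc hL] /andP [hs hLs].
by rewrite /apply_layer /= IH ?size_apply_comp // /layer_fits size_apply_comp.
Qed.

Lemma count_apply_layer (P : pred bool) L s : all comp_wf L -> layer_fits L s ->
  count P (apply_layer s L) = count P s.
Proof.
elim: L s => [|c L IH] s //= /andP [hc hL] /andP [hs hLs].
by rewrite /apply_layer /= IH ?count_apply_comp // /layer_fits size_apply_comp.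
Qed.

Lemma val_apply_layer_unused L s p : all comp_wf L -> 0 < p -> ~~ used L p ->
  val_at (apply_layer s L) p = val_at s p.
Proof.
elim: L s => [|c L IH] s //= /andP [hc hL] p0.
rewrite used_cons !negb_or => /and3P [/negPf h1 /negPf h2 h3].
by rewrite /apply_layer /= IH // val_apply_comp // h1 h2.
Qed.

Lemma apply_layer_comp L s c : layer_wf L -> layer_fits L s -> comp_wf c ->
  c.2 <= size s -> ~~ used L c.1 -> ~~ used L c.2 ->
  apply_layer (apply_comp s c) L = apply_comp (apply_layer s L) c.
Proof.
elim: L s => [|d L IH] s //; rewrite layer_wf_cons => /and4P [hd _ _ hL] /andP [hds hLs] hc hcs.
rewrite !used_cons !negb_or => /and3P [h11 h12 u1] /and3P [h21 h22 u2].
have hcd : comp_disjoint c d by apply/and4P.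
rewrite /apply_layer /= apply_compC //.
by apply: IH; rewrite /layer_fits ?size_apply_comp.
Qed.

Lemma apply_layer_extract L s c : layer_wf L -> layer_fits L s -> c \in L ->
  apply_layer s L = apply_layer (apply_comp s c) (filter (predC1 c) L).
Proof.
elim: L s => [|d L IH] s // hdL; have := hdL; rewrite layer_wf_cons => /and4P [hd u1 u2 hL].
move=> /andP [hds hLs]; rewrite inE; case: (eqVneq d c) => [edc|hdc] /= hcL.
  subst d; rewrite eqxx; congr apply_layer; apply/esym/all_filterP/allP => e he /=.
  by apply: (contraNneq _ u1) => ec; apply/usedP; exists e => //; rewrite ec eqxx.
rewrite hdc in hcL *.
have hcs : c.2 <= size s by move/allP: hLs; apply.
have hLs' : layer_fits L (apply_comp s d) by rewrite /layer_fits size_apply_comp.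
have hdc' : comp_disjoint d c by apply: layer_wf_disjoint hdL _ _ hdc; rewrite inE ?eqxx ?hcL ?orbT.
rewrite /apply_layer /= -/(apply_layer _ L) (IH _ hL hLs' hcL) apply_compC //.
exact: layer_wf_comp hL hcL.
Qed.

Lemma val_apply_layer_pair L s c : layer_wf L -> layer_fits L s -> c \in L ->
  val_at (apply_layer s L) c.1 = val_at s c.1 && val_at s c.2 /\
  val_at (apply_layer s L) c.2 = val_at s c.1 || val_at s c.2.
Proof.
move=> hL hLs hcL; have hc := layer_wf_comp hL hcL; have /andP [c1 c12] := hc.
have [u1 u2] := unused_filter_predC1 hL hcL.
have /andP [hf _] := layer_wf_filter (predC1 c) hL.
have c2 : 0 < c.2 := ltn_trans c1 c12.
rewrite (apply_layer_extract hL hLs hcL) !val_apply_layer_unused // !val_apply_comp //.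
by rewrite !eqxx (ltn_eqF c12).
Qed.

Lemma apply_layer_mono L s t : le01 s t -> le01 (apply_layer s L) (apply_layer t L).
Proof. by elim: L s t => [|c L IH] s t //= hst; apply: IH; apply: apply_comp_mono. Qed.

Lemma apply_layer_sorted L s : all comp_wf L -> layer_fits L s -> sorted01 s ->
  apply_layer s L = s.
Proof.
elim: L => [|c L IH] //= /andP [hc hL] /andP [hcs hLs] hs.
have /andP [c1 c12] := hc.
rewrite /apply_layer /= apply_comp_id //; first exact: IH.
by apply: sorted01_leq_nth => //; lia.
Qed.

Lemma apply_layer_filter (P : pred comparator) L s : layer_wf L -> layer_fits L s ->
  (forall c, c \in L -> ~~ P c -> val_at s c.1 ==> val_at s c.2) ->
  apply_layer s L = apply_layer s (filter P L).
Proof.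
elim: L s => [|d L IH] s // hdL; have := hdL; rewrite layer_wf_cons => /and4P [hd _ _ hL].
move=> /andP [hds hLs] hyp /=; case: (boolP (P d)) => Pd; last first.
  by rewrite /apply_layer /= apply_comp_id ?(hyp d) ?mem_head //; apply: IH => // c hc;
     apply: hyp; rewrite inE hc orbT.
rewrite /apply_layer /= -!/(apply_layer _ _); apply: IH => //.
  by rewrite /layer_fits size_apply_comp.
move=> c hc Pc; have hdc : d != c by apply: (contraNneq _ Pc) => <-.
have /and4P [/negPf e11 /negPf e12 /negPf e21 /negPf e22] :=
  layer_wf_disjoint hdL (mem_head d L) (mem_behead (hc : c \in behead (d :: L))) hdc.
have /andP [c1 c12] := layer_wf_comp hL hc.
rewrite !val_apply_comp ?(ltn_trans c1 c12) // ![c.1 == _]eq_sym ![c.2 == _]eq_sym.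
by rewrite e11 e12 e21 e22; apply: hyp; rewrite ?inE ?hc ?orbT.
Qed.

Lemma apply_layer_cons_id L s c : layer_wf L -> layer_fits L s -> comp_wf c ->
  c.2 <= size s -> ~~ used L c.1 -> ~~ used L c.2 ->
  val_at (apply_layer s L) c.1 ==> val_at (apply_layer s L) c.2 ->
  apply_layer s (c :: L) = apply_layer s L.
Proof.
move=> hL hLs hc hcs u1 u2 hv; rewrite [LHS]/apply_layer /= -/(apply_layer _ L).
rewrite apply_layer_comp // apply_comp_id //.
by rewrite size_apply_layer //; case/andP: hL.
Qed.

Lemma layer_ok_wf n L : layer_ok n L -> layer_wf L.
Proof.
case/andP=> /allP hL hu; rewrite /layer_wf hu andbT; apply/allP => c /hL.
by rewrite /comparator_ok /comp_wf => /andP [/andP [-> ->] _].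
Qed.

Lemma layer_ok_fits n L s : layer_ok n L -> size s = n -> layer_fits L s.
Proof. by case/andP=> /allP hL _ hs; apply/allP => c /hL /andP [_]; rewrite hs. Qed.

Lemma layer_ok_cons n c L : layer_ok n (c :: L) =
  [&& comparator_ok n c, ~~ used L c.1, ~~ used L c.2 & layer_ok n L].
Proof.
rewrite /layer_ok /= inE negb_or.
case: (boolP (comparator_ok n c)) => //= /andP [/andP [_ c12] _]; rewrite (ltn_eqF c12) /=.
by rewrite /used; case: (all _ _); case: (_ \notin _); case: (_ \notin _).
Qed.

Lemma layer_ok_filter n P L : layer_ok n L -> layer_ok n (filter P L).
Proof.
move=> hL; have /andP [_ hu] := layer_wf_filter P (layer_ok_wf hL).
case/andP: hL => hc _; rewrite /layer_ok hu andbT.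
by apply/allP => c; rewrite mem_filter => /andP [_]; apply: (allP hc).
Qed.

Lemma comparator_ok_wf n c : comparator_ok n c -> comp_wf c.
Proof. by case/andP=> /andP [c1 c12] _; apply/andP. Qed.

Lemma size_apply_layer_ok n L s : layer_ok n L -> size s = n -> size (apply_layer s L) = n.
Proof.
move=> hL hs; rewrite size_apply_layer ?(layer_ok_fits hL) //.
by case/andP: (layer_ok_wf hL).
Qed.

Lemma count_apply_layer_ok (P : pred bool) n L s : layer_ok n L -> size s = n ->
  count P (apply_layer s L) = count P s.
Proof.
move=> hL hs; rewrite count_apply_layer ?(layer_ok_fits hL) //.
by case/andP: (layer_ok_wf hL).
Qed.

Lemma network_ok_rcons n C L : network_ok n (rcons C L) = network_ok n C && layer_ok n L.
Proof. by rewrite /network_ok all_rcons andbC. Qed.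

Lemma run_rcons C L s : run (rcons C L) s = apply_layer (run C s) L.
Proof. by rewrite /run foldl_rcons. Qed.

Lemma size_run n C s : network_ok n C -> size s = n -> size (run C s) = n.
Proof.
elim/last_ind: C => [|C L IH] //; rewrite /network_ok all_rcons => /andP [hL hC] hs.
by rewrite run_rcons (size_apply_layer_ok hL) ?IH.
Qed.

Lemma count_run (P : pred bool) n C s : network_ok n C -> size s = n ->
  count P (run C s) = count P s.
Proof.
elim/last_ind: C => [|C L IH] //; rewrite /network_ok all_rcons => /andP [hL hC] hs.
by rewrite run_rcons (count_apply_layer_ok _ hL) ?(size_run hC) ?IH.
Qed.

Lemma run_mono C s t : le01 s t -> le01 (run C s) (run C t).
Proof.
by elim/last_ind: C => [|C L IH] // hst; rewrite !run_rcons; apply/apply_layer_mono/IH.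
Qed.

Lemma run_sorted n C s : network_ok n C -> size s = n -> sorted01 s -> run C s = s.
Proof.
elim/last_ind: C => [|C L IH] //; rewrite /network_ok all_rcons => /andP [hL hC] hs ss.
rewrite run_rcons IH // apply_layer_sorted ?(layer_ok_fits hL) //.
by case/andP: (layer_ok_wf hL).
Qed.

Definition sorting_on (n : nat) (C : network) :=
  network_ok n C /\ forall s, size s = n -> sorted01 (run C s).

Lemma sorting_networkP n C : sorting_network n C <-> sorting_on n C.
Proof.
split=> -[hC hs]; split=> //.
- by move=> s hn; have := hs (Tuple (introT eqP hn)).
- by move=> x; apply: hs; rewrite size_tuple.
Qed.

Lemma le01_set_nth s t k v : le01 s t -> le01 (set_nth false s k v) (set_nth false t k v).
Proof. by move=> hst q; rewrite !nth_set_nth /=; case: (q == k); rewrite ?implybb. Qed.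

Lemma le01_set_false s k : le01 (set_nth false s k false) s.
Proof. by move=> q; rewrite nth_set_nth /=; case: (q == k); rewrite ?implybb. Qed.

Lemma le01_set_true s k : le01 s (set_nth false s k true).
Proof. by move=> q; rewrite nth_set_nth /=; case: (q == k); rewrite ?implybT ?implybb. Qed.

Fixpoint potential (s : seq bool) : nat :=
  if s is b :: s' then b * size s' + potential s' else 0.

Definition swap_descent (s : seq bool) k :=
  set_nth false (set_nth false s k false) k.+1 true.

Lemma potential_swap_descent s k : k.+1 < size s -> nth false s k -> ~~ nth false s k.+1 ->
  potential (swap_descent s k) < potential s.
Proof.
elim: s k => [|b s IH] [|k] //=.
  by case: s IH => [|b' s] //= _ _ -> /negPf -> /=; lia.
move=> hk h1 h2; have := IH k hk h1 h2; rewrite /swap_descent /= !size_set_nth.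
have -> : maxn k.+2 (maxn k.+1 (size s)) = size s by lia.
lia.
Qed.

Lemma size_swap_descent s k : k.+1 < size s -> size (swap_descent s k) = size s.
Proof. by move=> hk; rewrite /swap_descent !size_set_nth; lia. Qed.

Lemma count_swap_descent s k : k.+1 < size s -> nth false s k -> ~~ nth false s k.+1 ->
  count negb (swap_descent s k) = count negb s.
Proof.
move=> hk h1 /negPf h2.
have := @count_set_nth_add negb s k false (ltnW hk).
have := @count_set_nth_add negb (set_nth false s k false) k.+1 true.
rewrite size_set_nth nth_set_nth /= eqn_leq ltnn /= h1 h2 /=.
have -> : k.+1 < maxn k.+1 (size s) by lia.
by rewrite /swap_descent; lia.
Qed.

Lemma unsorted01_descent s : ~~ sorted01 s ->
  exists2 k, k.+1 < size s & nth false s k && ~~ nth false s k.+1.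
Proof.
elim: s => [|a [|b s] IH] //.
have -> : sorted01 [:: a, b & s] = (a ==> b) && sorted01 (b :: s) by [].
rewrite negb_and => /orP [hab|hbs]; last by have [k hk hd] := IH hbs; exists k.+1.
by exists 0 => //; clear IH; move: hab; case: a; case: b.
Qed.

Section NonAdjacentRedundant.

Variables (n : nat) (P : network) (L : layer) (i j : nat).
Hypotheses (hP : network_ok n P) (hL : layer_ok n L)
  (hsort : forall s, size s = n -> sorted01 (apply_layer (run P s) L))
  (hij : (i, j) \in L) (hj : j != i.+1).

Local Notation band s := (i <= count negb s < j).

Let range_ij : [&& 0 < i, i < j & j <= n].
Proof. by case/andP: hL => /allP /(_ _ hij) /andP [/andP [/= -> ->] ->]. Qed.

Let val_output s p : size s = n -> 0 < p <= n ->
  val_at (apply_layer (run P s) L) p = (count negb s < p).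
Proof.
move=> hs /andP [p0 pn]; have hrs := size_run hP hs.
rewrite /val_at nth_sorted01 ?hsort ?(size_apply_layer_ok hL) //; last by lia.
by rewrite (count_apply_layer_ok _ hL) // (count_run _ hP) //; lia.
Qed.

Let val_pair s : size s = n ->
  val_at (run P s) i && val_at (run P s) j = (count negb s < i) /\
  val_at (run P s) i || val_at (run P s) j = (count negb s < j).
Proof.
move=> hs; have [<- <-] := val_apply_layer_pair (layer_ok_wf hL)
  (layer_ok_fits hL (size_run hP hs)) hij.
by rewrite !val_output //=; lia.
Qed.

Let band_flip s : size s = n -> band s -> val_at (run P s) j = ~~ val_at (run P s) i.
Proof.
move=> hs hb; have [] := val_pair hs.
have -> : (count negb s < i) = false by lia.
have -> : (count negb s < j) = true by lia.
by case: (val_at _ i); case: (val_at _ j).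
Qed.

Let band_const s t : size s = n -> size t = n -> le01 s t -> band s -> band t ->
  val_at (run P s) i = val_at (run P t) i.
Proof.
move=> hs ht hst bs bt; have m := run_mono P hst.
have := m j.-1; rewrite -!/(val_at _ j) (band_flip hs bs) (band_flip ht bt).
by have := m i.-1; rewrite -!/(val_at _ i); case: (val_at _ i); case: (val_at _ i).
Qed.

Let band_false m s : potential s <= m -> size s = n -> band s -> val_at (run P s) i = false.
Proof.
have j2 : i.+2 <= j by lia.
elim: m s => [|m IH] s hpot hs hb; case: (boolP (sorted01 s)) => ss.
  1,3: by rewrite (run_sorted hP hs ss) /val_at nth_sorted01 //; lia.
all: have [k hk /andP [h1 h2]] := unsorted01_descent ss.
all: have := potential_swap_descent hk h1 h2; rewrite -/(swap_descent s k) => hdec.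
  lia.
set t := swap_descent s k.
have ht : size t = n by rewrite size_swap_descent.
have bt : band t by rewrite count_swap_descent.
have {}IH : val_at (run P t) i = false by apply: IH => //; rewrite /t; lia.
have hk' : k < size s by lia.
case: (ltnP (count negb s).+1 j) => hc.
- set y := set_nth false s k false.
  have hy : size y = n by rewrite size_set_nth; lia.
  have cy : count negb y = (count negb s).+1.
    by have := count_set_nth_add negb false hk'; rewrite h1 /= -/y; lia.
  have hys : le01 y s by exact: le01_set_false.
  have hyt : le01 y t by apply: le01_set_true.
  rewrite -(band_const hy hs hys) ?cy //; first by rewrite (band_const hy ht hyt) ?cy; lia.
  lia.
- set y := set_nth false s k.+1 true.
  have hy : size y = n by rewrite size_set_nth; lia.
  have cy : count negb y = (count negb s).-1.
    by have := count_set_nth_add negb true hk; rewrite (negPf h2) /= -/y; lia.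
  have hsy : le01 s y by exact: le01_set_true.
  have hty : le01 t y by apply/le01_set_nth/le01_set_false.
  rewrite (band_const hs hy hsy) ?cy //; last by lia.
  by rewrite -(band_const ht hy hty) ?cy //; lia.
Qed.

Lemma nonadjacent_comp_redundant s : size s = n -> val_at (run P s) i ==> val_at (run P s) j.
Proof.
move=> hs; apply/implyP => vi; apply: contraT => /negPf vj.
have [] := val_pair hs; rewrite vi vj /= => /esym ci /esym cj.
suff : band s by move/(band_false (leqnn _) hs); rewrite vi.
lia.
Qed.

End NonAdjacentRedundant.

Definition adjacent (c : comparator) := c.2 == c.1.+1.

Lemma drop_nonadjacent n P L : sorting_on n (rcons P L) ->
  sorting_on n (rcons P (filter adjacent L)).
Proof.
rewrite /sorting_on network_ok_rcons => -[/andP [hP hL] hs].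
have hs' s : size s = n -> sorted01 (apply_layer (run P s) L) by rewrite -run_rcons; apply: hs.
split=> [|s hsn]; first by rewrite network_ok_rcons hP layer_ok_filter.
rewrite run_rcons -apply_layer_filter ?(layer_ok_wf hL) ?(layer_ok_fits hL (size_run hP hsn))
  ?hs' //.
move=> [i j] hij hj; exact: (nonadjacent_comp_redundant hP hL hs' hij hj).
Qed.

Lemma add_comp_last n P L c : sorting_on n (rcons P L) -> comparator_ok n c ->
  ~~ used L c.1 -> ~~ used L c.2 -> sorting_on n (rcons P (c :: L)).
Proof.
rewrite /sorting_on !network_ok_rcons => -[/andP [hP hL] hs] hc u1 u2.
split=> [|s hsn]; first by rewrite hP layer_ok_cons hc u1 u2 hL.
have hrs := size_run hP hsn; have /andP [/andP [c1 c12] c2n] := hc.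
have ho : size (apply_layer (run P s) L) = n by rewrite (size_apply_layer_ok hL).
have hso : sorted01 (apply_layer (run P s) L) by rewrite -run_rcons; apply: hs.
rewrite run_rcons apply_layer_cons_id ?(layer_ok_wf hL) ?(layer_ok_fits hL)
  ?(comparator_ok_wf hc) ?hrs //.
by apply: sorted01_leq_nth; rewrite ?ho //; lia.
Qed.

Definition unused_count (n : nat) (L : layer) := count (fun p => ~~ used L p) (iota 1 n).

Lemma unused_count_cons n L c : 0 < c.1 <= n -> ~~ used L c.1 ->
  unused_count n (c :: L) < unused_count n L.
Proof.
move=> hc u1; rewrite /unused_count.
have hin : c.1 \in iota 1 n by rewrite mem_iota; lia.
move: (iota 1 n) hin => s /splitPr [s1 s2]; rewrite !count_cat /= used_cons eqxx u1 /=.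
rewrite add0n addnS ltnS leq_add //; apply: sub_count => p;
  by rewrite used_cons !negb_or => /and3P [].
Qed.

Lemma saturate_adjacent n P L : sorting_on n (rcons P L) -> all adjacent L ->
  exists2 L', sorting_on n (rcons P L') & llnf n L'.
Proof.
move Hm : (unused_count n L) => m; elim/ltn_ind: m L Hm => m IH L hm hs hadj.
case: (boolP (all (fun i => used L i || used L i.+1) (iota 1 n.-1))) => hall.
  by exists L; rewrite // /llnf hadj.
have [i] := allPn hall; rewrite mem_iota negb_or => /andP [i1 i2] /andP [u1 u2].
have hc : comparator_ok n (i, i.+1) by rewrite /comparator_ok /=; lia.
apply: (IH _ _ ((i, i.+1) :: L) erefl).
- by rewrite -hm; apply: unused_count_cons => //=; lia.
- exact: add_comp_last.
- by rewrite /= hadj andbT /adjacent.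
Qed.

Section AdjacentLayer.

Variables (n : nat) (L : layer) (w : seq bool).
Hypotheses (hL : layer_ok n L) (hadj : all adjacent L) (hw : size w = n).

Let val_pair c : c \in L ->
  val_at (apply_layer w L) c.1 = val_at w c.1 && val_at w c.2 /\
  val_at (apply_layer w L) c.2 = val_at w c.1 || val_at w c.2.
Proof. exact: val_apply_layer_pair (layer_ok_wf hL) (layer_ok_fits hL hw). Qed.

Let adjacent_snd c : c \in L -> c.2 = c.1.+1.
Proof. by move/(allP hadj)/eqP. Qed.

Let unused_val p : 0 < p -> ~~ used L p -> val_at (apply_layer w L) p = val_at w p.
Proof. by apply: val_apply_layer_unused; case/andP: (layer_ok_wf hL). Qed.

Lemma val_le_output_up a : 0 < a -> exists2 a',
  val_at w a ==> val_at (apply_layer w L) a' & a' = a \/ a' = a.+1 /\ (a, a.+1) \in L.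
Proof.
move=> a0; case: (boolP (used L a)) => [/usedP [c hc /orP [] /eqP ea]|ua].
- exists c.2; first by have [_ ->] := val_pair hc; rewrite ea; case: (val_at w c.1).
  right; rewrite (adjacent_snd hc) ea; split=> //.
  by rewrite -(adjacent_snd hc) -surjective_pairing.
- by exists a; [rewrite ea; have [_ ->] := val_pair hc; case: (val_at w c.2); rewrite ?orbT | left].
- by exists a; [rewrite unused_val ?implybb | left].
Qed.

Lemma val_le_output_down b : 0 < b -> exists2 b',
  val_at (apply_layer w L) b' ==> val_at w b & b' = b \/ b'.+1 = b /\ (b', b) \in L.
Proof.
move=> b0; case: (boolP (used L b)) => [/usedP [c hc /orP [] /eqP eb]|ub].
- exists b; last by left.
  by rewrite eb; have [-> _] := val_pair hc; case: (val_at w c.1); case: (val_at w c.2).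
- exists c.1; first by have [-> _] := val_pair hc; rewrite eb;
    case: (val_at w c.1); case: (val_at w c.2).
  right; rewrite eb (adjacent_snd hc); split=> //.
  by rewrite -(adjacent_snd hc) -surjective_pairing.
- by exists b; [rewrite unused_val ?implybb | left].
Qed.

Lemma sorted_before_adjacent_layer a b : sorted01 (apply_layer w L) ->
  0 < a -> a < b -> b <= n -> (a, b) \notin L -> val_at w a ==> val_at w b.
Proof.
move=> hs a0 ab bn nab.
have [a' ha ea] := val_le_output_up a0.
have [b' hb eb] := val_le_output_down (ltn_trans a0 ab).
have b'0 : 0 < b'.
  case: eb => [->|[_ hb']]; first exact: ltn_trans a0 ab.
  by case/andP: hL => /allP /(_ _ hb') /andP [/andP []].
have b'n : b' <= n by case: eb => [->|[eb' _]] //; rewrite -eb' in bn; exact: ltnW.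
have a'b' : a' <= b'.
  case: ea eb => [->|[-> ha']] [->|[eb' _]]; [exact: ltnW | by rewrite -ltnS eb' | by [] |].
  rewrite -ltnS eb'; case: (ltnP a.+1 b) => // hab.
  have eba : b = a.+1 by apply/eqP; rewrite eqn_leq hab ab.
  by move: nab; rewrite eba ha'.
have ho : size (apply_layer w L) = n by rewrite (size_apply_layer_ok hL).
have : val_at (apply_layer w L) a' ==> val_at (apply_layer w L) b'.
  by apply: (sorted01_leq_nth hs); rewrite ?ho; clear -a'b' b'0 b'n; lia.
by move: ha hb; do 4 case: (val_at _ _).
Qed.

End AdjacentLayer.

Lemma blocks_aux_head n L f i a : a \in nth [::] (blocks_aux f i n L) 0 -> a = i \/ a = i.+1.
Proof.
case: f => [|f] /=; first by rewrite ?nth_nil ?in_nil.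
case: ltnP => _; first by rewrite ?nth_nil ?in_nil.
case: ifP => _ /=; rewrite !inE; first by case/orP => /eqP ->; auto.
by move/eqP ->; left.
Qed.

Lemma blocks_aux_range n L f i k a : layer_ok n L ->
  a \in nth [::] (blocks_aux f i n L) k -> i <= a <= n.
Proof.
move=> /andP [/allP hL _]; elim: f i k => [|f IH] i k /=; first by rewrite ?nth_nil ?in_nil.
case: ltnP => hi; first by rewrite ?nth_nil ?in_nil.
case: ifP => hc; case: k => [|k] /=.
- by rewrite !inE => /orP [] /eqP ->; [rewrite leqnn | have /andP [_ ->] := hL _ hc]; lia.
- by move/IH; lia.
- by rewrite inE => /eqP ->; rewrite leqnn hi.
- by move/IH; lia.
Qed.

Lemma blocks_aux_consecutive n L f i k a b : layer_wf L -> all adjacent L ->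
  a \in nth [::] (blocks_aux f i n L) k -> b \in nth [::] (blocks_aux f i n L) k.+1 ->
  a < b /\ (a, b) \notin L.
Proof.
move=> hL hadj; have adj c : c \in L -> c.2 = c.1.+1 by move/(allP hadj)/eqP.
elim: f i k => [|f IH] i k /=; first by rewrite ?nth_nil ?in_nil.
case: ltnP => hi; first by rewrite ?nth_nil ?in_nil.
case: ifP => hc; case: k => [|k] /=; try exact: IH.
- rewrite !inE => ha /blocks_aux_head hb.
  have ab : a < b by case/orP: ha => /eqP ->; case: hb => ->; lia.
  split=> //; apply/negP => hab; have /= eb := adj _ hab; subst b.
  case/orP: ha => /eqP ea; subst a; first by case: hb; lia.
  have hne : (i.+1, i.+2) != (i, i.+1) by apply/eqP; case; lia.
  by have /and4P [] := layer_wf_disjoint hL hab hc hne; rewrite eqxx.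
- rewrite !inE => /eqP -> /blocks_aux_head hb; split; first by case: hb => ->; lia.
  case: hb => ->; first by rewrite hc.
  by apply/negP => /adj /=; lia.
Qed.

Lemma last_layer_rcons C L : last_layer (rcons C L) = L.
Proof. by rewrite /last_layer size_rcons nth_rcons ltnn eqxx. Qed.

Lemma prev_layer_rcons C Lp L : prev_layer (rcons (rcons C Lp) L) = Lp.
Proof.
by rewrite /prev_layer !size_rcons ltnS ltnS leq0n subSS subSS subn0 nth_rcons size_rcons ltnSn
  nth_rcons ltnn eqxx.
Qed.

Lemma add_comp_prev n Q Lp L a b : sorting_on n (rcons (rcons Q Lp) L) ->
  all adjacent L -> comparator_ok n (a, b) -> (a, b) \notin L ->
  ~~ used Lp a -> ~~ used Lp b -> sorting_on n (rcons (rcons Q ((a, b) :: Lp)) L).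
Proof.
rewrite /sorting_on !network_ok_rcons => -[/andP [/andP [hQ hLp] hL] hs] hadj hab nab ua ub.
have hs' s : size s = n -> sorted01 (apply_layer (apply_layer (run Q s) Lp) L).
  by move=> hsn; rewrite -!run_rcons hs.
split=> [|s hsn]; first by rewrite hQ hL layer_ok_cons hab ua ub hLp.
have hw := size_run hQ hsn; have /andP [/andP [a0 ab] bn] := hab.
rewrite !run_rcons apply_layer_cons_id ?(layer_ok_wf hLp) ?(layer_ok_fits hLp) //=.
- exact: hs'.
- exact: comparator_ok_wf hab.
- by rewrite hw.
- by apply: (sorted_before_adjacent_layer hL hadj) => //;
    [exact: size_apply_layer_ok | exact: hs'].
Qed.

Lemma shift_comp_prev n Q Lp L c d : sorting_on n (rcons (rcons Q Lp) L) ->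
  c \in L -> ~~ used Lp c.1 -> ~~ used Lp c.2 -> comparator_ok n d ->
  ~~ used (filter (predC1 c) L) d.1 -> ~~ used (filter (predC1 c) L) d.2 ->
  sorting_on n (rcons (rcons Q (c :: Lp)) (d :: filter (predC1 c) L)).
Proof.
rewrite /sorting_on !network_ok_rcons => -[/andP [/andP [hQ hLp] hL] hs] hcL u1 u2 hd v1 v2.
have hc : comparator_ok n c by case/andP: hL => /allP h _; apply: h.
have hL' := layer_ok_filter (predC1 c) hL.
split=> [|s hsn]; first by rewrite hQ !layer_ok_cons hc u1 u2 hLp hd v1 v2 hL'.
have hw : size (apply_layer (run Q s) Lp) = n by rewrite (size_apply_layer_ok hLp) ?(size_run hQ).
have hcs : c.2 <= size (run Q s) by rewrite (size_run hQ) //; case/andP: hc.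
have e1 : apply_layer (run Q s) (c :: Lp) = apply_comp (apply_layer (run Q s) Lp) c.
  exact: apply_layer_comp (layer_ok_wf hLp) (layer_ok_fits hLp (size_run hQ hsn))
    (comparator_ok_wf hc) hcs u1 u2.
have hext := apply_layer_extract (layer_ok_wf hL) (layer_ok_fits hL hw) hcL.
have hso : sorted01 (apply_layer (apply_comp (apply_layer (run Q s) Lp) c) (filter (predC1 c) L)).
  by rewrite -hext -!run_rcons hs.
have hw' : size (apply_comp (apply_layer (run Q s) Lp) c) = n.
  by rewrite size_apply_comp ?comparator_ok_wf ?hw //; case/andP: hc.
have /andP [/andP [d0 d12] dn] := hd.
rewrite !run_rcons e1 apply_layer_cons_id ?(layer_ok_wf hL') ?(layer_ok_fits hL') ?hw'
  ?(comparator_ok_wf hd) //.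
apply: sorted01_leq_nth; rewrite ?(size_apply_layer_ok hL') //; clear -d0 d12 dn; lia.
Qed.

Definition blocks_clash n Lp L k :=
  has (fun i => ~~ used Lp i) (nth [::] (blocks n L) k) &&
  has (fun i => ~~ used Lp i) (nth [::] (blocks n L) k.+1).

Definition exposed_pair n Lp L i :=
  [&& (i, i.+1) \in L, ~~ used Lp i, ~~ used Lp i.+1 &
      (1 < i) && ~~ used L i.-1 || (i.+2 <= n) && ~~ used L i.+2].

Lemma co_saturated_rcons n Q Lp L : layer_ok n L -> llnf n L ->
  ~~ has (blocks_clash n Lp L) (iota 0 (size (blocks n L)).-1) ->
  ~~ has (exposed_pair n Lp L) (iota 0 n) ->
  co_saturated n (rcons (rcons Q Lp) L).
Proof.
move=> hL hll /hasPn nclash /hasPn nexp.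
rewrite /co_saturated last_layer_rcons prev_layer_rcons; split=> // [k hk|i hi u1 u2].
  by apply: nclash; rewrite mem_iota; lia.
have : i \in iota 0 n by rewrite mem_iota; case/andP: hL => /allP /(_ _ hi) /andP [_ /=]; lia.
move/nexp; rewrite /exposed_pair hi u1 u2 /= negb_or !negb_and !negbK.
by case/andP=> h1 h2; split=> hi'; [move: h1 | move: h2]; rewrite hi'.
Qed.

Lemma co_saturate_step n Q Lp L : sorting_on n (rcons (rcons Q Lp) L) -> llnf n L ->
  co_saturated n (rcons (rcons Q Lp) L) \/
  exists Lp' L', sorting_on n (rcons (rcons Q Lp') L') /\ unused_count n Lp' < unused_count n Lp.
Proof.
move=> hs hll; have /andP [hadj _] := hll.
have hL : layer_ok n L by case: hs => /[dup] _; rewrite network_ok_rcons => /andP [].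
have hLw := layer_ok_wf hL.
case: (@hasP _ (blocks_clash n Lp L) (iota 0 (size (blocks n L)).-1)) =>
    [[k _ /andP [/hasP [a ha ua] /hasP [b hb ub]]]|nclash].
  have [ab nab] := blocks_aux_consecutive hLw hadj ha hb.
  have /andP [a1 _] := blocks_aux_range hL ha; have /andP [_ bn] := blocks_aux_range hL hb.
  right; exists ((a, b) :: Lp), L; split.
  - by apply: add_comp_prev => //; rewrite /comparator_ok /=; clear -a1 ab bn; lia.
  - by apply: unused_count_cons => //=; clear -a1 ab bn; lia.
case: (@hasP _ (exposed_pair n Lp L) (iota 0 n)) => [[i _ /and4P [hi u1 u2 hnb]]|nexp]; last first.
  by left; apply: co_saturated_rcons => //; apply/hasP.
have /andP [/andP [/= i1 _] /= i2] : comparator_ok n (i, i.+1).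
  by case/andP: hL => /allP h _; apply: h.
have [v1 v2] := unused_filter_predC1 hLw hi.
have hnf q : ~~ used L q -> ~~ used (filter (predC1 (i, i.+1)) L) q.
  exact/contra/used_filter.
right; exists ((i, i.+1) :: Lp).
case/orP: hnb => /andP [hi0 hu].
- exists ((i.-1, i) :: filter (predC1 (i, i.+1)) L); split.
  + apply: shift_comp_prev => //; last exact: hnf.
    by rewrite /comparator_ok /=; clear -i1 i2 hi0; lia.
  + by apply: unused_count_cons => //=; clear -i1 i2; lia.
- exists ((i.+1, i.+2) :: filter (predC1 (i, i.+1)) L); split.
  + apply: shift_comp_prev => //; last exact: hnf.
    by rewrite /comparator_ok /=; clear -i1 i2 hi0; lia.
  + by apply: unused_count_cons => //=; clear -i1 i2; lia.
Qed.

Lemma co_saturate n Q Lp L : sorting_on n (rcons (rcons Q Lp) L) ->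
  exists Lp' L', sorting_on n (rcons (rcons Q Lp') L') /\ co_saturated n (rcons (rcons Q Lp') L').
Proof.
move Hm : (unused_count n Lp) => m; elim/ltn_ind: m Lp L Hm => m IH Lp L hm hs.
have [L' hs' hll] := saturate_adjacent (drop_nonadjacent hs) (filter_all adjacent L).
case: (co_saturate_step hs' hll) => [hcs|[Lp' [L'' [hs'' hlt]]]]; first by exists Lp, L'.
by apply: (IH _ _ Lp' L'' erefl hs''); rewrite -hm.
Qed.

Lemma co_saturated_small n C : n <= 1 -> network_ok n C -> co_saturated n C.
Proof.
move=> hn hC; have empty k : nth [::] C k = [::].
  case: (ltnP k (size C)) => hk; last by rewrite nth_default.
  move/allP: hC => /(_ _ (mem_nth [::] hk)).
  by case: (nth _ _ _) => // c L /andP [/andP [/andP [/andP [h1 h2] h3] _] _]; lia.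
rewrite /co_saturated /last_layer /prev_layer !empty if_same.
by case: n hn {hC} => [|[|]] //; split=> // [k|i]; rewrite ?in_nil.
Qed.

Lemma sorting_layer_two n L : 1 < n -> sorting_on n [:: L] -> n = 2 /\ (1, 2) \in L.
Proof.
move=> n2 hs; have [/andP [hL _] hsL] := drop_nonadjacent (P := [::]) hs.
have key b : 1 < b <= n -> (1, b) \in filter adjacent L.
  move=> hb; apply: contraT => nb; set x := true :: nseq n.-1 false.
  have hx : size x = n by rewrite /= size_nseq; lia.
  have := sorted_before_adjacent_layer (a := 1) hL (filter_all _ _) hx (hsL x hx) isT _ _ nb.
  rewrite /val_at /x /=; case: b hb {nb} => [|[|b]] //= hb.
  by rewrite nth_nseq if_same => h; apply: h; lia.
have h2 : (1, 2) \in filter adjacent L by apply: key; lia.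
split; last by move: h2; rewrite mem_filter => /andP [].
case: (ltnP 2 n) => h; last lia.
have : (1, 3) \in filter adjacent L by apply: key; lia.
by rewrite mem_filter.
Qed.

Lemma sorting_network_two : sorting_network 2 [:: [:: (1, 2)]].
Proof.
split=> //; case=> s; case: s => [|a [|b []]] //= _.
by rewrite /run /apply_layer /apply_comp /val_at /=; case: a; case: b.
Qed.

Lemma co_saturated_two : co_saturated 2 [:: [:: (1, 2)]].
Proof. by split=> // i; rewrite /= inE => /eqP [->]. Qed.

Theorem theorem4 (n : nat) (C : network) :
  sorting_network n C ->
  exists N : network,
    [/\ sorting_network n N, depth N = depth C & co_saturated n N].
Proof.
move=> /[dup] hCs /sorting_networkP hC.
have [hn|n2] := leqP n 1.
  by exists C; split=> //; apply: co_saturated_small hn (proj1 hC).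
case/lastP: C hCs hC => [|C L] _ hC.
  by have [_] := sorting_layer_two n2 (conj (isT : network_ok n [:: [::]]) (proj2 hC)).
case/lastP: C hC => [|Q Lp] hC.
  have [n_eq2 _] := sorting_layer_two n2 hC; subst n.
  by exists [:: [:: (1, 2)]]; split=> //; [exact: sorting_network_two | exact: co_saturated_two].
have [Lp' [L' [hs hcs]]] := co_saturate hC.
exists (rcons (rcons Q Lp') L'); split=> //; first exact/sorting_networkP.
by rewrite /depth !size_rcons.
Qed.
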